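(* A convex hexagon is affine regular if and only if both of the following hold: - all six of its vertex triangles have the same area; - for one of the triangles whose vertices are vertices of the hexagon and which has exactly one side in common with the hexagon (for example the triangle $013$ in the hexagon $012345$), its area is twice the area of a vertex triangle.
   Context: An affine map of the plane is a bijection of the plane that maps collinear points to collinear points. A polygon is affine regular if it is the image of a regular polygon under an affine map, with vertices corresponding in order. For a hexagon with vertices $0,\dots,5$ in cyclic order, the vertex triangles are the triangles with vertices $i-1,i,i+1$ (indices mod $6$). *)

From Stdlib Require Import Reals Lra Arith.
Open Scope R_scope.

Definition point := (R * R)%type.

Definition sarea (a b c : point) : R :=
  ((fst b - fst a) * (snd c - snd a) - (fst c - fst a) * (snd b - snd a)) / 2.

Definition area (a b c : point) : R := Rabs (sarea a b c).

Definition collinear (a b c : point) : Prop := sarea a b c = 0.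

(* affine map as in the paper: a bijection of the plane mapping collinear
   points to collinear points *)
Definition affine_map (f : point -> point) : Prop :=
  (exists g : point -> point, (forall x, g (f x) = x) /\ (forall y, f (g y) = y)) /\
  (forall a b c, collinear a b c -> collinear (f a) (f b) (f c)).

(* A hexagon is given by P : nat -> point; its vertices are P 0, ..., P 5,
   and vertex indices are always taken modulo 6. *)
Definition V (P : nat -> point) (k : nat) : point := P (k mod 6).

(* convex (non-degenerate) hexagon with vertices 0..5 in cyclic order:
   for each side (i,i+1) all other vertices lie strictly on the same side,
   the side being the same for all sides (consistent orientation). *)
Definition convex_hexagon (P : nat -> point) : Prop :=
  exists s : R, (s = 1 \/ s = -1) /\
    forall i j : nat, (i < 6)%nat -> (j < 6)%nat ->
      j <> i -> j <> ((i + 1) mod 6)%nat ->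
      s * sarea (V P i) (V P (i + 1)) (V P j) > 0.

Definition regular_hexagon (Q : nat -> point) : Prop :=
  exists (cx cy r theta s : R), r > 0 /\ (s = 1 \/ s = -1) /\
    forall k : nat, (k < 6)%nat ->
      Q k = (cx + r * cos (theta + s * INR k * PI / 3),
             cy + r * sin (theta + s * INR k * PI / 3)).

Definition affine_regular (P : nat -> point) : Prop :=
  exists (f : point -> point) (Q : nat -> point),
    affine_map f /\ regular_hexagon Q /\
    forall k : nat, (k < 6)%nat -> P k = f (Q k).

(* area of the vertex triangle (i-1, i, i+1) *)
Definition vtri_area (P : nat -> point) (i : nat) : R :=
  area (V P (i + 5)) (V P i) (V P (i + 1)).

From Stdlib Require Import Reals Arith Lra Lia Classical.
Open Scope R_scope.

(* An affine-regular hexagon P has a centre o with P k + P (k+2) = P (k+1) + o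
   ([hex_center]), like a regular hexagon, and conversely a hexagon with such a
   centre and P 0, P 1, o not collinear is the image of the regular hexagon
   under an affine frame.  A bijection preserving collinearity maps lines onto
   lines, hence parallel lines to parallel lines and non-degenerate
   parallelograms to parallelograms; so an affine-regular hexagon has a centre,
   and the area conditions follow by computation.  Conversely, in the affine
   frame sending P 0, P 1, P 2 to (0,0), (1,0), (1,1), convexity and equal
   vertex triangles leave the one-parameter family P 3 = (0,y), P 4 = (x,y),
   P 5 = (x,1) with x (y - 1) = -1, and each of the twelve candidate triangles
   of doubled area forces y = 2: this is the hexagon with centre (0,1). *)

Definition lerp (a b : point) (t : R) : point :=
  (fst a + t * (fst b - fst a), snd a + t * (snd b - snd a)).

Definition parallel (a b c d : point) : Prop :=
  (fst b - fst a) * (snd d - snd c) - (fst d - fst c) * (snd b - snd a) = 0.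

Definition parallelogram (a b c d : point) : Prop :=
  fst a + fst c = fst b + fst d /\ snd a + snd c = snd b + snd d.

Ltac expand_points := repeat match goal with p : point |- _ => destruct p end;
  unfold lerp, parallel, parallelogram, collinear, sarea in *; simpl in *.

Lemma sarea_rotate (a b c : point) : sarea a b c = sarea b c a.
Proof. expand_points; field. Qed.

Lemma collinear_lerp (a b : point) (t : R) : collinear a b (lerp a b t).
Proof. expand_points; field. Qed.

Lemma collinear_same_12 (a b : point) : collinear a a b.
Proof. expand_points; field. Qed.

Lemma collinear_same_23 (a b : point) : collinear a b b.
Proof. expand_points; field. Qed.

Lemma collinear_same_13 (a b : point) : collinear a b a.
Proof. expand_points; field. Qed.

Lemma collinear_ex_lerp (p q r : point) : p <> q -> collinear p q r ->
  exists t, r = lerp p q t.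
Proof.
  destruct p as [px py], q as [qx qy], r as [rx ry].
  unfold collinear, sarea, lerp; simpl; intros Hpq H.
  destruct (Req_dec qx px) as [Ex | Ex].
  - subst qx. assert (Hy : qy - py <> 0) by (intro; apply Hpq; f_equal; lra).
    exists ((ry - py) / (qy - py)).
    assert (rx = px) by (assert ((rx - px) * (qy - py) = 0) by lra; nra).
    subst rx; f_equal; field; exact Hy.
  - exists ((rx - px) / (qx - px)).
    f_equal; [field; lra |].
    apply (Rmult_eq_reg_r (qx - px)); [field_simplify; lra | lra].
Qed.

Lemma lerp_inj_r (a b c : point) (t : R) : t <> 0 -> lerp a b t = lerp a c t -> b = c.
Proof.
  destruct a, b, c; unfold lerp; simpl; intros Ht E; injection E; intros Ey Ex.
  f_equal; apply (Rmult_eq_reg_l t); lra.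
Qed.

Lemma collinear_common_line (p q r s t : point) : p <> q ->
  collinear p q r -> collinear p q s -> collinear p q t -> collinear r s t.
Proof.
  intros Hpq Hr Hs Ht.
  destruct (collinear_ex_lerp p q r Hpq Hr) as [a ->].
  destruct (collinear_ex_lerp p q s Hpq Hs) as [b ->].
  destruct (collinear_ex_lerp p q t Hpq Ht) as [c ->].
  expand_points; field.
Qed.

Lemma exists_noncollinear (p q : point) : p <> q -> exists r, ~ collinear p q r.
Proof.
  intros Hpq. exists (fst p - (snd q - snd p), snd p + (fst q - fst p)).
  destruct p as [px py], q as [qx qy]; unfold collinear, sarea; simpl; intros H.
  assert (Hsq : (qx - px)² + (qy - py)² = 0) by (unfold Rsqr; lra).
  apply Rplus_sqr_eq_0 in Hsq. apply Hpq; f_equal; lra.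
Qed.

Lemma not_parallel_meet (a b c d : point) : ~ parallel a b c d ->
  exists z, collinear a b z /\ collinear c d z.
Proof.
  unfold parallel; intros Hn.
  set (D := (fst b - fst a) * (snd d - snd c) - (fst d - fst c) * (snd b - snd a)) in Hn.
  exists (lerp a b (((fst c - fst a) * (snd d - snd c) - (fst d - fst c) * (snd c - snd a)) / D)).
  split; [apply collinear_lerp |].
  unfold D in *; expand_points; field; exact Hn.
Qed.

Lemma parallelogram_sym (a b c d : point) : parallelogram a b c d -> parallelogram a d c b.
Proof. expand_points; lra. Qed.

Lemma parallelogram_sides_disjoint (a b c d z : point) : parallelogram a b c d ->
  ~ collinear a b d -> collinear a b z -> collinear d c z -> False.
Proof.
  intros Hp Hn Hab Hdc. apply Hn.
  assert (E : sarea a b d = sarea a b z - sarea d c z).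
  { destruct a as [ax ay], b as [bx by'], c as [cx cy], d as [dx dy], z as [zx zy].
    destruct Hp as [Hx Hy]; simpl in Hx, Hy.
    replace cx with (bx + dx - ax) by lra. replace cy with (by' + dy - ay) by lra.
    unfold sarea; simpl; field. }
  unfold collinear in *. rewrite E, Hab, Hdc. ring.
Qed.

Lemma parallelogram_of_parallel (a b c d : point) :
  parallel a b d c -> parallel a d b c -> ~ collinear a b d -> parallelogram a b c d.
Proof.
  destruct a as [ax ay], b as [bx by'], c as [cx cy], d as [dx dy].
  unfold parallel, parallelogram, collinear, sarea; simpl. intros H1 H2 Hn.
  set (D := (bx - ax) * (dy - ay) - (dx - ax) * (by' - ay)).
  assert (HD : D <> 0) by (intro E; apply Hn; unfold D in E; lra).
  (* With [w := a + c - b - d], [H1] and [H2] say cross(b - a, w) = cross(d - a, w) = 0,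
     and [D w = cross(b - a, w) (d - a) - cross(d - a, w) (b - a)]. *)
  split; apply (Rmult_eq_reg_r D); auto; apply Rminus_diag_uniq.
  - transitivity ((dx - ax) * ((bx - ax) * (cy - dy) - (cx - dx) * (by' - ay))
                  - (bx - ax) * ((dx - ax) * (cy - by') - (cx - bx) * (dy - ay)));
      [unfold D; ring | rewrite H1, H2; ring].
  - transitivity ((dy - ay) * ((bx - ax) * (cy - dy) - (cx - dx) * (by' - ay))
                  - (by' - ay) * ((dx - ax) * (cy - by') - (cx - bx) * (dy - ay)));
      [unfold D; ring | rewrite H1, H2; ring].
Qed.

Lemma parallelogram_fourth (a b c d : point) : parallelogram a b c d ->
  c = (fst b + fst d - fst a, snd b + snd d - snd a).
Proof. destruct a, b, c, d; unfold parallelogram; simpl; intros [Hx Hy]; f_equal; lra. Qed.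

Section LineClosedSet.

Variable S : point -> Prop.
Hypothesis S_line : forall u v x, u <> v -> S u -> S v -> collinear u v x -> S x.
Variables a b c : point.
Hypotheses (Sa : S a) (Sb : S b) (Sc : S c) (abc : ~ collinear a b c).

Let ab : a <> b.
Proof. intros ->; exact (abc (collinear_same_12 b c)). Qed.

Let ac : a <> c.
Proof. intros ->; exact (abc (collinear_same_13 c b)). Qed.

Let bc : b <> c.
Proof. intros ->; exact (abc (collinear_same_23 a c)). Qed.

(* [sarea a x c + sarea a b x] is [sarea a b c] times the sum of the affine
   coordinates of [x] along [b - a] and [c - a]; when it is nonzero, [x] lies
   on a line joining a point of [ab] to a point of [ac]. *)
Let S_coord_sum (x : point) : sarea a x c + sarea a b x <> 0 -> S x.
Proof.
  intros Hx. set (t := (sarea a x c + sarea a b x) / sarea a b c).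
  assert (Ht : t <> 0).
  { unfold t, Rdiv. apply Rmult_integral_contrapositive_currified; [exact Hx |].
    apply Rinv_neq_0_compat, abc. }
  apply (S_line (lerp a b t) (lerp a c t)).
  - intro E. exact (bc (lerp_inj_r a b c t Ht E)).
  - exact (S_line a b _ ab Sa Sb (collinear_lerp a b t)).
  - exact (S_line a c _ ac Sa Sc (collinear_lerp a c t)).
  - unfold t. assert (H : sarea a b c <> 0) by exact abc. revert H.
    destruct a as [ax ay], b as [bx by'], c as [cx cy], x as [xx xy].
    unfold collinear, sarea, lerp; simpl; intros H. field. intro E; apply H; lra.
Qed.

Lemma line_closed_full (x : point) : S x.
Proof.
  destruct (Req_dec (sarea a x c + sarea a b x) 0) as [Hx | Hx]; [| exact (S_coord_sum x Hx)].
  assert (Habc : sarea a b c <> 0) by exact abc.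
  (* Translating [x] by [b - a] and [2 (b - a)] raises the coordinate sum by 1 and 2. *)
  set (y k := (fst x + k * (fst b - fst a), snd x + k * (snd b - snd a))).
  assert (Hy : forall k,
    sarea a (y k) c + sarea a b (y k) = sarea a x c + sarea a b x + k * sarea a b c).
  { intro k. unfold y. destruct a, b, c, x; unfold sarea; simpl; field. }
  apply (S_line (y 1) (y 2)); [| apply S_coord_sum; rewrite Hy, Hx; lra ..|].
  - intro E. apply ab. unfold y in E. injection E; intros.
    destruct a, b; simpl in *; f_equal; lra.
  - unfold y. destruct a, b, x; unfold collinear, sarea; simpl; field.
Qed.

End LineClosedSet.

Section CollinearityPreservingBijection.

Variable f : point -> point.
Hypothesis Hf : affine_map f.

Lemma affine_map_inj (x y : point) : f x = f y -> x = y.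
Proof.
  destruct Hf as [[g [gK _]] _]. intro E. rewrite <- (gK x), <- (gK y), E. reflexivity.
Qed.

Lemma affine_map_noncollinear (a b c : point) :
  ~ collinear a b c -> ~ collinear (f a) (f b) (f c).
Proof.
  intros Habc Hcol.
  destruct Hf as [[g [_ fK]] f_col].
  assert (Hab : f a <> f b).
  { intro E. apply affine_map_inj in E. subst b. exact (Habc (collinear_same_12 a c)). }
  (* The preimage of the line through [f a] and [f b] is closed under lines and
     contains the non-collinear points [a], [b], [c]: it is the whole plane. *)
  set (S x := collinear (f a) (f b) (f x)).
  assert (S_line : forall u v x, u <> v -> S u -> S v -> collinear u v x -> S x).
  { intros u v x Huv Su Sv Hx.
    assert (Hfuv : f u <> f v) by (intro E; exact (Huv (affine_map_inj u v E))).
    apply (collinear_common_line (f u) (f v)); [exact Hfuv | | | exact (f_col u v x Hx)];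
      apply (collinear_common_line (f a) (f b)); auto using collinear_same_13, collinear_same_23. }
  destruct (exists_noncollinear (f a) (f b) Hab) as [y Hy].
  apply Hy. rewrite <- (fK y).
  apply (line_closed_full S S_line a b c);
    [apply collinear_same_13 | apply collinear_same_23 | exact Hcol | exact Habc].
Qed.

Lemma affine_map_collinear_rev (a b c : point) :
  collinear (f a) (f b) (f c) -> collinear a b c.
Proof.
  intros H. apply NNPP. intro Hn. exact (affine_map_noncollinear a b c Hn H).
Qed.

Lemma affine_map_parallel (a b c d : point) : parallelogram a b c d -> ~ collinear a b d ->
  parallel (f a) (f b) (f d) (f c).
Proof.
  intros Hp Hn. apply NNPP. intros Hnp.
  destruct (not_parallel_meet _ _ _ _ Hnp) as [z [Hab Hdc]].
  pose proof Hf as [[g [_ fK]] _].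
  rewrite <- (fK z) in Hab, Hdc.
  apply (parallelogram_sides_disjoint a b c d (g z) Hp Hn);
    apply affine_map_collinear_rev; assumption.
Qed.

Lemma affine_map_parallelogram (a b c d : point) : parallelogram a b c d -> ~ collinear a b d ->
  parallelogram (f a) (f b) (f c) (f d).
Proof.
  intros Hp Hn.
  assert (Hn' : ~ collinear a d b) by (intro H; apply Hn; expand_points; lra).
  apply parallelogram_of_parallel.
  - exact (affine_map_parallel a b c d Hp Hn).
  - exact (affine_map_parallel a d c b (parallelogram_sym a b c d Hp) Hn').
  - exact (affine_map_noncollinear a b d Hn).
Qed.

End CollinearityPreservingBijection.

Definition cross (u v : point) : R := fst u * snd v - snd u * fst v.

Definition frame (o u v x : point) : point :=
  (fst o + fst x * fst u + snd x * fst v, snd o + fst x * snd u + snd x * snd v).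

Definition frame_coords (o u v p : point) : point :=
  (((fst p - fst o) * snd v - fst v * (snd p - snd o)) / cross u v,
   (fst u * (snd p - snd o) - snd u * (fst p - fst o)) / cross u v).

Lemma sarea_frame (o u v x y z : point) :
  sarea (frame o u v x) (frame o u v y) (frame o u v z) = cross u v * sarea x y z.
Proof. unfold frame, cross; expand_points; field. Qed.

Lemma frame_parallelogram (o u v a b c d : point) : parallelogram a b c d ->
  parallelogram (frame o u v a) (frame o u v b) (frame o u v c) (frame o u v d).
Proof. unfold frame; expand_points; intros [Hx Hy]; split; nra. Qed.

Lemma frame_coordsK (o u v p : point) : cross u v <> 0 -> frame o u v (frame_coords o u v p) = p.
Proof. unfold frame_coords, frame, cross; expand_points; intros H; f_equal; field; exact H. Qed.

Lemma frameK (o u v x : point) : cross u v <> 0 -> frame_coords o u v (frame o u v x) = x.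
Proof. unfold frame_coords, frame, cross; expand_points; intros H; f_equal; field; exact H. Qed.

Lemma frame_affine (o u v : point) : cross u v <> 0 -> affine_map (frame o u v).
Proof.
  intros H. split.
  - exists (frame_coords o u v). split; intro; [apply frameK | apply frame_coordsK]; exact H.
  - intros a b c. unfold collinear. rewrite sarea_frame. intros ->. ring.
Qed.

Definition reg_hex (cx cy r theta s : R) (k : nat) : point :=
  (cx + r * cos (theta + s * INR k * PI / 3), cy + r * sin (theta + s * INR k * PI / 3)).

Lemma cos_sin_add_twice (p d : R) : cos d = 1/2 ->
  cos p + cos (p + 2 * d) = cos (p + d) /\ sin p + sin (p + 2 * d) = sin (p + d).
Proof.
  intros Hc.
  assert (Hs : sin d * sin d = 3/4) by (pose proof (sin2_cos2 d) as H; unfold Rsqr in H; nra).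
  replace (p + 2 * d) with (p + d + d) by ring.
  repeat rewrite ?sin_plus, ?cos_plus. rewrite Hc. split; apply Rminus_diag_uniq.
  - transitivity (cos p * (3/4 - sin d * sin d)); [field | rewrite Hs; ring].
  - transitivity (sin p * (3/4 - sin d * sin d)); [field | rewrite Hs; ring].
Qed.

Lemma cross_cos_sin (p d : R) : cos p * sin (p + d) - sin p * cos (p + d) = sin d.
Proof.
  rewrite sin_plus, cos_plus. pose proof (sin2_cos2 p) as H. unfold Rsqr in H.
  transitivity (sin d * (sin p * sin p + cos p * cos p)); [ring | rewrite H; ring].
Qed.

Lemma cos_sin_sixth (s : R) : s = 1 \/ s = -1 -> cos (s * PI / 3) = 1/2 /\ sin (s * PI / 3) <> 0.
Proof.
  intros Hs. assert (Hsin : 0 < sin (PI / 3)) by (apply sin_gt_0; pose proof PI_RGT_0; lra).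
  destruct Hs as [-> | ->].
  - replace (1 * PI / 3) with (PI / 3) by field. split; [apply cos_PI3 | lra].
  - replace (-1 * PI / 3) with (- (PI / 3)) by field. rewrite cos_neg, sin_neg.
    split; [apply cos_PI3 | lra].
Qed.

Lemma reg_hex_parallelogram (cx cy r theta s : R) (k : nat) : r > 0 -> s = 1 \/ s = -1 ->
  let Q := reg_hex cx cy r theta s in
  parallelogram (Q k) (Q (S k)) (Q (S (S k))) (cx, cy) /\ ~ collinear (Q k) (Q (S k)) (cx, cy).
Proof.
  intros Hr Hs Q. destruct (cos_sin_sixth s Hs) as [Hc Hsn].
  set (p := theta + s * INR k * PI / 3). set (d := s * PI / 3) in Hc, Hsn.
  assert (Q0 : Q k = (cx + r * cos p, cy + r * sin p)) by reflexivity.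
  assert (Q1 : Q (S k) = (cx + r * cos (p + d), cy + r * sin (p + d))).
  { unfold Q, reg_hex, p, d. rewrite S_INR. f_equal; do 3 f_equal; field. }
  assert (Q2 : Q (S (S k)) = (cx + r * cos (p + 2 * d), cy + r * sin (p + 2 * d))).
  { unfold Q, reg_hex, p, d. rewrite !S_INR. f_equal; do 3 f_equal; field. }
  rewrite Q0, Q1, Q2. destruct (cos_sin_add_twice p d Hc) as [Ecos Esin].
  unfold parallelogram, collinear, sarea; simpl. split; [split; nra |].
  intro H. apply Hsn. rewrite <- cross_cos_sin with (p := p).
  apply (Rmult_eq_reg_l (r * r)); [nra | nra].
Qed.

Definition hex_center (P : nat -> point) (o : point) : Prop :=
  forall k, (k <= 3)%nat -> parallelogram (P k) (P (S k)) (P (S (S k))) o.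

Lemma hex_center_unique (P P' : nat -> point) (o : point) :
  hex_center P o -> hex_center P' o -> P 0%nat = P' 0%nat -> P 1%nat = P' 1%nat ->
  forall k, (k < 6)%nat -> P k = P' k.
Proof.
  intros H H' E0 E1.
  assert (Hk : forall k, (k <= 4)%nat -> P k = P' k /\ P (S k) = P' (S k)).
  { induction k as [| k IH]; intros Hk; [auto |].
    destruct IH as [Ek ESk]; [lia |]. split; [exact ESk |].
    rewrite (parallelogram_fourth _ _ _ _ (H k ltac:(lia))),
            (parallelogram_fourth _ _ _ _ (H' k ltac:(lia))), Ek, ESk.
    reflexivity. }
  intros k Hk6. destruct (Nat.eq_dec k 5) as [-> | Hne].
  - exact (proj2 (Hk 4%nat ltac:(lia))).
  - exact (proj1 (Hk k ltac:(lia))).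
Qed.

Lemma affine_regular_hex_center (P : nat -> point) : affine_regular P -> exists o, hex_center P o.
Proof.
  intros [f [Q [Hf [[cx [cy [r [theta [s [Hr [Hs HQ]]]]]]] HPQ]]]].
  exists (f (cx, cy)). intros k Hk.
  destruct (reg_hex_parallelogram cx cy r theta s k Hr Hs) as [Hp Hn].
  assert (HP : forall j, (j < 6)%nat -> P j = f (reg_hex cx cy r theta s j)).
  { intros j Hj. rewrite HPQ, HQ by exact Hj. reflexivity. }
  rewrite !HP by lia. exact (affine_map_parallelogram f Hf _ _ _ _ Hp Hn).
Qed.

Lemma hex_center_sarea (P : nat -> point) (o : point) : hex_center P o ->
  (forall i, (i < 6)%nat -> sarea (V P (i + 5)) (V P i) (V P (i + 1)) = sarea (P 0%nat) (P 1%nat) o) /\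
  sarea (P 0%nat) (P 1%nat) (P 3%nat) = 2 * sarea (P 0%nat) (P 1%nat) o.
Proof.
  intros H.
  pose proof (parallelogram_fourth _ _ _ _ (H 0%nat ltac:(lia))) as E2.
  pose proof (parallelogram_fourth _ _ _ _ (H 1%nat ltac:(lia))) as E3.
  pose proof (parallelogram_fourth _ _ _ _ (H 2%nat ltac:(lia))) as E4.
  pose proof (parallelogram_fourth _ _ _ _ (H 3%nat ltac:(lia))) as E5.
  split; [intros i Hi; destruct i as [|[|[|[|[|[|i]]]]]]; [..| lia]; unfold V |]; simpl;
    rewrite ?E5, ?E4, ?E3, ?E2; destruct (P 0%nat), (P 1%nat), o; unfold sarea; simpl; field.
Qed.

Lemma hex_center_areas (P : nat -> point) (o : point) : hex_center P o ->
  (forall i j : nat, (i < 6)%nat -> (j < 6)%nat -> vtri_area P i = vtri_area P j) /\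
  (exists i d : nat, (i < 6)%nat /\ (d = 3 \/ d = 4)%nat /\
     area (V P i) (V P (i + 1)) (V P (i + d)) = 2 * vtri_area P i).
Proof.
  intros H. destruct (hex_center_sarea P o H) as [Hv H013].
  split.
  - intros i j Hi Hj. unfold vtri_area, area. rewrite (Hv i Hi), (Hv j Hj). reflexivity.
  - exists 0%nat, 3%nat. split; [lia | split; [lia |]].
    unfold vtri_area, area. rewrite (Hv 0%nat ltac:(lia)).
    unfold V; simpl. rewrite H013, Rabs_mult, (Rabs_right 2) by lra. reflexivity.
Qed.

Lemma hex_center_affine_regular (P : nat -> point) (o : point) :
  hex_center P o -> ~ collinear (P 0%nat) (P 1%nat) o -> affine_regular P.
Proof.
  intros H Hn.
  set (Q := reg_hex 0 0 1 0 1).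
  set (sg := sin (PI / 3)).
  assert (Hsg : sg > 0) by (apply sin_gt_0; pose proof PI_RGT_0; lra).
  assert (Q0 : Q 0%nat = (1, 0)).
  { unfold Q, reg_hex. replace (0 + 1 * INR 0 * PI / 3) with 0 by (simpl; field).
    rewrite cos_0, sin_0. f_equal; ring. }
  assert (Q1 : Q 1%nat = (1/2, sg)).
  { unfold Q, reg_hex, sg. replace (0 + 1 * INR 1 * PI / 3) with (PI / 3) by (simpl; field).
    rewrite cos_PI3. f_equal; ring. }
  (* The frame at [o] sending [Q 0] to [P 0] and [Q 1] to [P 1]. *)
  set (u := (fst (P 0%nat) - fst o, snd (P 0%nat) - snd o)).
  set (v := ((fst (P 1%nat) - fst o - fst u / 2) / sg, (snd (P 1%nat) - snd o - snd u / 2) / sg)).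
  set (f := frame o u v).
  assert (Huv : cross u v <> 0).
  { assert (E : sarea (P 0%nat) (P 1%nat) o = cross u v * sg / 2).
    { unfold cross, u, v. destruct (P 0%nat), (P 1%nat), o; unfold sarea; simpl; field; lra. }
    intro E0. apply Hn. unfold collinear. rewrite E, E0. lra. }
  exists f, Q. split; [exact (frame_affine o u v Huv) |]. split.
  { exists 0, 0, 1, 0, 1. split; [lra | split; [left; reflexivity | reflexivity]]. }
  intros k Hk. symmetry.
  apply (hex_center_unique (fun j => f (Q j)) P o); [| exact H | | | exact Hk].
  - intros j _. replace o with (f (0, 0)) by (unfold f, frame; destruct o; simpl; f_equal; ring).
    apply frame_parallelogram, (reg_hex_parallelogram 0 0 1 0 1 j); [lra | left; reflexivity].
  - unfold f, frame. rewrite Q0. unfold u. destruct (P 0%nat), o; simpl; f_equal; ring.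
  - unfold f, frame. rewrite Q1. unfold u, v. destruct (P 0%nat), (P 1%nat), o; simpl; f_equal; field; lra.
Qed.

Section UnitFrame.

Variable N : nat -> point.
Hypotheses (N0 : N 0%nat = (0, 0)) (N1 : N 1%nat = (1, 0)) (N2 : N 2%nat = (1, 1)).

Lemma unit_frame_equal_areas :
  (forall k, (k < 6)%nat -> sarea (V N (k + 5)) (V N k) (V N (k + 1)) = 1/2) ->
  sarea (N 0%nat) (N 1%nat) (N 3%nat) > 0 -> sarea (N 0%nat) (N 1%nat) (N 4%nat) > 0 ->
  exists x y, N 3%nat = (0, y) /\ N 4%nat = (x, y) /\ N 5%nat = (x, 1) /\ x * (y - 1) = -1.
Proof.
  intros Hv P3 P4.
  pose proof (Hv 0%nat ltac:(lia)) as V0. pose proof (Hv 2%nat ltac:(lia)) as V2.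
  pose proof (Hv 3%nat ltac:(lia)) as V3. pose proof (Hv 4%nat ltac:(lia)) as V4.
  pose proof (Hv 5%nat ltac:(lia)) as V5.
  unfold V in V0, V2, V3, V4, V5; simpl in V0, V2, V3, V4, V5.
  rewrite N0, N1, N2 in *.
  destruct (N 3%nat) as [x3 y3], (N 4%nat) as [x4 y4], (N 5%nat) as [x5 y5].
  unfold sarea in *; simpl in *.
  assert (Ex3 : x3 = 0) by lra. assert (Ey5 : y5 = 1) by lra. subst x3 y5.
  assert (Ex5 : x5 = x4) by (assert (y3 * (x5 - x4) = 0) by lra; nra). subst x5.
  assert (Hx4 : (x4 - 1) * (1 + x4 * (y3 - 1)) = 0) by nra.
  assert (Hx : x4 * (y3 - 1) = -1) by (destruct (Rmult_integral _ _ Hx4); nra).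
  exists x4, y3. repeat split; try reflexivity; [| exact Hx]. f_equal. nra.
Qed.

Variables x y : R.
Hypotheses (N3 : N 3%nat = (0, y)) (N4 : N 4%nat = (x, y)) (N5 : N 5%nat = (x, 1)).
Hypothesis Hxy : x * (y - 1) = -1.

Lemma unit_frame_doubled_triangle (i d : nat) : (i < 6)%nat -> (d = 3 \/ d = 4)%nat ->
  sarea (V N i) (V N (i + 1)) (V N (i + d)) = 1 -> x = -1 /\ y = 2.
Proof.
  intros Hi Hd.
  destruct i as [|[|[|[|[|[|i]]]]]]; [..| lia]; destruct Hd as [-> | ->]; unfold V; simpl;
    rewrite ?N0, ?N1, ?N2, ?N3, ?N4, ?N5; unfold sarea; simpl; intros H; split; nra.
Qed.

End UnitFrame.

Lemma Rabs_sign (s x : R) : s = 1 \/ s = -1 -> s * x > 0 -> Rabs x = s * x.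
Proof. intros [-> | ->] H; [rewrite Rabs_right | rewrite Rabs_left1]; lra. Qed.

Lemma convex_sarea_sign (P : nat -> point) (s : R) :
  (forall i j : nat, (i < 6)%nat -> (j < 6)%nat -> j <> i -> j <> ((i + 1) mod 6)%nat ->
     s * sarea (V P i) (V P (i + 1)) (V P j) > 0) ->
  forall i d : nat, (i < 6)%nat -> (2 <= d <= 5)%nat ->
  s * sarea (V P i) (V P (i + 1)) (V P (i + d)) > 0.
Proof.
  intros Hc i d Hi Hd.
  replace (V P (i + d)) with (V P ((i + d) mod 6)) by (unfold V; rewrite Nat.Div0.mod_mod; reflexivity).
  apply Hc; [exact Hi | apply Nat.mod_upper_bound; lia | |];
    destruct i as [|[|[|[|[|[|i]]]]]]; [..| lia]; destruct d as [|[|[|[|[|[|d]]]]]];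
    try lia; simpl; lia.
Qed.

Lemma convex_signed_areas (P : nat -> point) : convex_hexagon P ->
  (forall i j : nat, (i < 6)%nat -> (j < 6)%nat -> vtri_area P i = vtri_area P j) ->
  (exists i d : nat, (i < 6)%nat /\ (d = 3 \/ d = 4)%nat /\
     area (V P i) (V P (i + 1)) (V P (i + d)) = 2 * vtri_area P i) ->
  let T := sarea (P 0%nat) (P 1%nat) (P 2%nat) in
  (forall k, (k < 6)%nat -> sarea (V P (k + 5)) (V P k) (V P (k + 1)) = T) /\
  (exists i d : nat, (i < 6)%nat /\ (d = 3 \/ d = 4)%nat /\
     sarea (V P i) (V P (i + 1)) (V P (i + d)) = 2 * T) /\
  T * sarea (P 0%nat) (P 1%nat) (P 3%nat) > 0 /\ T * sarea (P 0%nat) (P 1%nat) (P 4%nat) > 0.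
Proof.
  intros [s [Hs Hc]] Heq [i [d [Hi [Hd Hdiag]]]] T.
  pose proof (convex_sarea_sign P s Hc) as Hpos.
  assert (HT : s * T > 0) by exact (Hpos 0%nat 2%nat ltac:(lia) ltac:(lia)).
  assert (Hvtri : forall k, (k < 6)%nat -> vtri_area P k = s * T).
  { intros k Hk. rewrite (Heq k 1%nat Hk ltac:(lia)). apply Rabs_sign; assumption. }
  assert (Hss : s * s = 1) by (destruct Hs as [-> | ->]; ring).
  assert (Hsx : forall x y, s * x > 0 -> s * y > 0 -> x * y > 0).
  { intros x y Hx Hy. replace (x * y) with ((s * x) * (s * y)) by
      (transitivity (s * s * (x * y)); [ring | rewrite Hss; ring]).
    apply Rmult_lt_0_compat; assumption. }
  repeat split.
  - intros k Hk. pose proof (Hvtri k Hk) as H. unfold vtri_area, area in H.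
    rewrite sarea_rotate in H |- *.
    rewrite (Rabs_sign s _ Hs (Hpos k 5%nat Hk ltac:(lia))) in H.
    apply (Rmult_eq_reg_l s); [exact H | lra].
  - exists i, d. split; [exact Hi | split; [exact Hd |]].
    assert (Hd' : (2 <= d <= 5)%nat) by (destruct Hd; lia).
    unfold area in Hdiag. rewrite (Rabs_sign s _ Hs (Hpos i d Hi Hd')), (Hvtri i Hi) in Hdiag.
    apply (Rmult_eq_reg_l s); [rewrite Hdiag; ring | lra].
  - exact (Hsx _ _ HT (Hpos 0%nat 3%nat ltac:(lia) ltac:(lia))).
  - exact (Hsx _ _ HT (Hpos 0%nat 4%nat ltac:(lia) ltac:(lia))).
Qed.

Lemma unit_frame_exists (P : nat -> point) : sarea (P 0%nat) (P 1%nat) (P 2%nat) <> 0 ->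
  exists (o u v : point) (N : nat -> point),
    cross u v = 2 * sarea (P 0%nat) (P 1%nat) (P 2%nat) /\ (forall k, P k = frame o u v (N k)) /\
    N 0%nat = (0, 0) /\ N 1%nat = (1, 0) /\ N 2%nat = (1, 1).
Proof.
  intros HT.
  set (u := (fst (P 1%nat) - fst (P 0%nat), snd (P 1%nat) - snd (P 0%nat))).
  set (v := (fst (P 2%nat) - fst (P 1%nat), snd (P 2%nat) - snd (P 1%nat))).
  assert (Hcross : cross u v = 2 * sarea (P 0%nat) (P 1%nat) (P 2%nat)).
  { unfold u, v, cross. destruct (P 0%nat), (P 1%nat), (P 2%nat); unfold sarea; simpl; field. }
  assert (Huv : cross u v <> 0) by lra.
  assert (HN : forall k p, P k = frame (P 0%nat) u v p -> frame_coords (P 0%nat) u v (P k) = p).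
  { intros k p E. rewrite E. apply frameK, Huv. }
  exists (P 0%nat), u, v, (fun k => frame_coords (P 0%nat) u v (P k)).
  repeat split; [exact Hcross | intro k; symmetry; apply frame_coordsK, Huv | ..]; apply HN.
  - unfold frame; destruct (P 0%nat); simpl; f_equal; ring.
  - unfold frame, u, v. destruct (P 0%nat), (P 1%nat); simpl; f_equal; ring.
  - unfold frame, u, v. destruct (P 0%nat), (P 1%nat), (P 2%nat); simpl; f_equal; ring.
Qed.

Lemma signed_areas_hex_center (P : nat -> point) :
  let T := sarea (P 0%nat) (P 1%nat) (P 2%nat) in
  (forall k, (k < 6)%nat -> sarea (V P (k + 5)) (V P k) (V P (k + 1)) = T) ->
  (exists i d : nat, (i < 6)%nat /\ (d = 3 \/ d = 4)%nat /\
     sarea (V P i) (V P (i + 1)) (V P (i + d)) = 2 * T) ->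
  T * sarea (P 0%nat) (P 1%nat) (P 3%nat) > 0 -> T * sarea (P 0%nat) (P 1%nat) (P 4%nat) > 0 ->
  exists o, hex_center P o /\ ~ collinear (P 0%nat) (P 1%nat) o.
Proof.
  intros T Hv [i [d [Hi [Hd Hdiag]]]] H3 H4.
  assert (HT : T <> 0) by (intro E; rewrite E in H3; lra).
  destruct (unit_frame_exists P HT) as [o [u [v [N [Hcross [HPN [N0 [N1 N2]]]]]]]].
  fold T in Hcross.
  assert (HN : forall a b c, sarea (P a) (P b) (P c) = 2 * T * sarea (N a) (N b) (N c)).
  { intros a b c. rewrite <- Hcross, <- (sarea_frame o), <- !HPN. reflexivity. }
  assert (HNV : forall a b c, sarea (V N a) (V N b) (V N c) = sarea (V P a) (V P b) (V P c) / (2 * T)).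
  { intros a b c. unfold V. rewrite HN. field. exact HT. }
  destruct (unit_frame_equal_areas N N0 N1 N2) as [x [y [N3 [N4 [N5 Hxy]]]]].
  - intros k Hk. rewrite HNV, (Hv k Hk). field. exact HT.
  - rewrite HN in H3. nra.
  - rewrite HN in H4. nra.
  - destruct (unit_frame_doubled_triangle N N0 N1 N2 x y N3 N4 N5 Hxy i d Hi Hd) as [-> ->].
    { rewrite HNV, Hdiag. field. exact HT. }
    exists (frame o u v (0, 1)). split.
    + intros k Hk. rewrite !HPN. apply frame_parallelogram.
      destruct k as [|[|[|[|k]]]]; [..| lia]; simpl;
        rewrite ?N0, ?N1, ?N2, ?N3, ?N4, ?N5; unfold parallelogram; simpl; split; ring.
    + unfold collinear. rewrite !HPN, sarea_frame, N0, N1, Hcross. unfold sarea; simpl. lra.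
Qed.

Theorem proposition3 (P : nat -> point) :
  convex_hexagon P ->
  (affine_regular P <->
   ((forall i j : nat, (i < 6)%nat -> (j < 6)%nat -> vtri_area P i = vtri_area P j) /\
    (exists i d : nat, (i < 6)%nat /\ (d = 3 \/ d = 4)%nat /\
       area (V P i) (V P (i + 1)) (V P (i + d)) = 2 * vtri_area P i))).
Proof.
  intros Hconv. split.
  - intros Hreg. destruct (affine_regular_hex_center P Hreg) as [o Ho].
    exact (hex_center_areas P o Ho).
  - intros [Heq Hdiag].
    destruct (convex_signed_areas P Hconv Heq Hdiag) as [Hv [Hd [H3 H4]]].
    destruct (signed_areas_hex_center P Hv Hd H3 H4) as [o [Ho Hn]].
    exact (hex_center_affine_regular P o Ho Hn).
Qed.
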